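(* Let $\mathbf{A}$ be an $n\times n$ skew-symmetric matrix with real entries and let $\mathbf{v}\in\mathbb{R}^n$. Then the polynomial \[\sum_{I\subseteq[n]}\det\bigl((\mathbf{A}+\mathbf{v}\mathbf{v}^T)[I]\bigr)\prod_{i\in I}z_i\in\mathbb{C}[z_1,\dots,z_n]\] is Hurwitz stable.
   Context: $\mathbf{M}[I]$ is the principal submatrix indexed by $I$, with $\det(\mathbf{M}[\emptyset])=1$. Skew-symmetric: $\mathbf{A}_{ij}=-\mathbf{A}_{ji}$, $\mathbf{A}_{ii}=0$. A polynomial $f\in\mathbb{C}[z_1,\dots,z_n]$ is Hurwitz stable if $f(z_1,\dots,z_n)\ne0$ whenever $\mathrm{Re}(z_i)>0$ for all $i$. *)

From HB Require Import structures.
From mathcomp Require Import all_boot all_order all_algebra.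
From mathcomp Require Import complex.
From mathcomp Require Import mpoly.
Set Implicit Arguments. Unset Strict Implicit. Unset Printing Implicit Defensive.
Import Order.TTheory GRing.Theory Num.Theory.
Local Open Scope ring_scope.

(* Principal submatrix M[I] of a square matrix, rows/columns indexed by the
   elements of I in increasing order; M[set0] is the 0x0 matrix (det = 1). *)
Definition principal_submx (R : Type) (n : nat) (M : 'M[R]_n) (I : {set 'I_n})
  : 'M[R]_#|I| :=
  mxsub (@enum_val _ (mem I)) (@enum_val _ (mem I)) M.

Definition skew_symmetric (R : pzRingType) (n : nat) (A : 'M[R]_n) : Prop :=
  forall i j, A i j = - A j i.

Definition hurwitz_stable (R : rcfType) (n : nat) (p : {mpoly R[i][n]}) : Prop :=
  forall z : 'I_n -> R[i], (forall i, 0 < Re (z i)) -> p.@[z] != 0.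

Definition principal_minor_poly (R : rcfType) (n : nat) (M : 'M[R]_n)
  : {mpoly R[i][n]} :=
  \sum_(I : {set 'I_n}) ((\det (principal_submx M I))%:C)%C%:MP
     * \prod_(i in I) 'X_i.

From HB Require Import structures.
From mathcomp Require Import all_boot all_order all_algebra all_fingroup.
From mathcomp Require Import complex mpoly.
From mathcomp Require Import ring.
Set Implicit Arguments. Unset Strict Implicit. Unset Printing Implicit Defensive.
Import Order.TTheory GRing.Theory Num.Theory.
Local Open Scope ring_scope.

(* With N := A + v v^T and Z := diag z, the polynomial evaluates at z to
   det (1 + Z N).  If x (1 + Z N) = 0 with x <> 0, put y := x Z, so that
   x = - y N, and pair with y: the real part of <x, y> is
   sum_j |x_j|^2 Re z_j > 0, but it is also - Re <y N, y>, i.e. minus the sum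
   of the real quadratic forms of N at Re y and at Im y.  Skew-symmetry kills A
   in these forms and leaves squares (a . v)^2 >= 0, a contradiction. *)

Section PrincipalMinors.
Variable T : comPzRingType.

Lemma det_mxsub_bij m n (h : 'I_m -> 'I_n) (B : 'M[T]_n) :
  injective h -> m = n -> \det (mxsub h h B) = \det B.
Proof.
move=> h_inj mn; subst m; pose s := perm h_inj.
have -> : mxsub h h B = perm_mx s *m B *m perm_mx s^-1.
  by rewrite -row_permE -col_permE; apply/matrixP => i j; rewrite !mxE !permE.
rewrite !det_mulmx !det_perm odd_permV mulrC mulrA -expr2 -exprM mulnC exprM.
by rewrite sqrrN !expr1n mul1r.
Qed.

Lemma det_principal_submx n (N : 'M[T]_n) (J : {set 'I_n}) :
  \det (principal_submx N J) =
  \det (\matrix_(i, j) if i \in J then N i j else (i == j)%:R).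
Proof.
set P := \matrix_(i, j) _.
pose h (t : 'I_(#|J| + #|~: J|)) : 'I_n :=
  match split t with
  | inl j => @enum_val _ (mem J) j
  | inr j => @enum_val _ (mem (~: J)) j
  end.
have hl j : h (lshift _ j) = @enum_val _ (mem J) j by rewrite /h (unsplitK (inl _ j)).
have hr j : h (rshift _ j) = @enum_val _ (mem (~: J)) j by rewrite /h (unsplitK (inr _ j)).
have h_inj : injective h.
  move=> t1 t2; rewrite /h; case: splitP => a t1a; case: splitP => b t2b E.
  - by apply: val_inj; rewrite /= t1a t2b (enum_val_inj E).
  - by have := enum_valP b; rewrite -E inE enum_valP.
  - by have := enum_valP a; rewrite E inE enum_valP.
  - by apply: val_inj; rewrite /= t1a t2b (enum_val_inj E).
rewrite -(det_mxsub_bij P h_inj); last by rewrite cardsC card_ord.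
rewrite -[mxsub h h P]submxK.
have -> : dlsubmx (mxsub h h P) = 0.
  apply/matrixP => i j; rewrite !mxE hl hr.
  have /negPf-> : enum_val i \notin J by have := enum_valP i; rewrite inE.
  by case: eqP => // E; have := enum_valP i; rewrite E inE enum_valP.
have -> : drsubmx (mxsub h h P) = 1%:M.
  apply/matrixP => i j; rewrite !mxE !hr (inj_eq enum_val_inj).
  by have /negPf-> : enum_val i \notin J by have := enum_valP i; rewrite inE.
rewrite det_ublock det1 mulr1; congr (\det _).
by apply/matrixP => i j; rewrite !mxE !hl enum_valP.
Qed.

Lemma det_add1_diag_mul n (N : 'M[T]_n) (d : 'rV[T]_n) :
  \det (1%:M + diag_mx d *m N) =
  \sum_(J : {set 'I_n}) \det (principal_submx N J) * \prod_(i in J) d 0 i.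
Proof.
under eq_bigr => J _ do rewrite det_principal_submx.
rewrite /determinant.
transitivity (\sum_(s : 'S_n) \sum_(J : {set 'I_n}) (-1) ^+ s *
   \prod_i (if i \in J then d 0 i * N i (s i) else (i == s i)%:R)).
  apply: eq_bigr => s _; rewrite -big_distrr /= -bigA_distr; congr (_ * _).
  by apply: eq_bigr => i _; rewrite mul_diag_mx !mxE addrC.
rewrite exchange_big /=; apply: eq_bigr => J _.
rewrite big_distrl /=; apply: eq_bigr => s _.
rewrite -mulrA; congr (_ * _).
rewrite [\prod_(i in J) _]big_mkcond -big_split /=; apply: eq_bigr => i _.
by rewrite !mxE; case: (i \in J); rewrite ?mulr1 // mulrC.
Qed.

End PrincipalMinors.

Definition quad_form (T : comPzRingType) n (M : 'M[T]_n) (a : 'rV[T]_n) : T :=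
  (a *m M *m a^T) 0 0.

Lemma quad_formD (T : comPzRingType) n (M1 M2 : 'M[T]_n) a :
  quad_form (M1 + M2) a = quad_form M1 a + quad_form M2 a.
Proof. by rewrite /quad_form mulmxDr mulmxDl mxE. Qed.

Lemma quad_form_skew (R : numDomainType) n (A : 'M[R]_n) a :
  skew_symmetric A -> quad_form A a = 0.
Proof.
move=> skewA; have AT : A^T = - A by apply/matrixP => i j; rewrite !mxE skewA.
have : quad_form A a = - quad_form A a.
  rewrite /quad_form -!trace_mx11 -[in LHS]mxtrace_tr !trmx_mul trmxK AT.
  by rewrite mulNmx mulmxN mulmxA raddfN.
by move/eqP; rewrite -addr_eq0 -mulr2n mulrn_eq0 => /eqP.
Qed.

Lemma quad_form_rank1 (T : comPzRingType) n (v : 'cV[T]_n) a :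
  quad_form (v *m v^T) a = (a *m v) 0 0 ^+ 2.
Proof.
rewrite /quad_form !mulmxA -mulmxA -trmx_mul.
by rewrite mxE big_ord1 [X in _ * X]mxE expr2.
Qed.

Section ComplexDot.
Variables (R : rcfType) (n : nat).

Definition dotc (x y : 'rV[R[i]]_n) : R[i] := (x *m (map_mx conjc y)^T) 0 0.

Lemma dotcNl x y : dotc (- x) y = - dotc x y.
Proof. by rewrite /dotc mulNmx mxE. Qed.

Lemma Re_dotc_real_mul (M : 'M[R]_n) y :
  complex.Re (dotc (y *m map_mx (real_complex R) M) y) =
  quad_form M (map_mx (@complex.Re R) y) + quad_form M (map_mx (@complex.Im R) y).
Proof.
rewrite /dotc /quad_form !mxE raddf_sum -big_split /=; apply: eq_bigr => j _.
rewrite !mxE !big_distrl raddf_sum -big_split /=; apply: eq_bigr => i _.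
rewrite !mxE; case: (y 0 i) => a b; case: (y 0 j) => c d /=; ring.
Qed.

Lemma Re_dotc_mul_diag_gt0 (x z : 'rV[R[i]]_n) :
  x != 0 -> (forall i, 0 < complex.Re (z 0 i)) ->
  0 < complex.Re (dotc x (x *m diag_mx z)).
Proof.
move=> x_neq0 z_pos.
pose sqnorm j := complex.Re (x 0 j) ^+ 2 + complex.Im (x 0 j) ^+ 2.
have Re_term j :
    complex.Re (x 0 j * (x 0 j * z 0 j)^*)%C = sqnorm j * complex.Re (z 0 j).
  by rewrite /sqnorm; case: (x 0 j) => a b; case: (z 0 j) => c d /=; ring.
have term_ge0 j : 0 <= sqnorm j * complex.Re (z 0 j).
  by rewrite mulr_ge0 ?addr_ge0 ?sqr_ge0 ?ltW.
rewrite /dotc mul_mx_diag mxE raddf_sum /=.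
under eq_bigr => j _ do rewrite !mxE Re_term.
rewrite lt_def sumr_ge0 // andbT; apply: contra x_neq0 => /eqP/psumr_eq0P.
move=> /(_ (fun j _ => term_ge0 j)) terms0; apply/eqP/matrixP => i j.
have /eqP := terms0 j isT; rewrite mulf_eq0 (gt_eqF (z_pos j)) orbF.
rewrite paddr_eq0 ?sqr_ge0 // !sqrf_eq0 (ord1 i) mxE.
by case: (x 0 j) => a b /andP [/= /eqP -> /eqP ->].
Qed.

End ComplexDot.

Lemma det_add1_diag_mul_real_neq0 (R : rcfType) n (M : 'M[R]_n) (z : 'rV[R[i]]_n) :
  (forall a, 0 <= quad_form M a) -> (forall i, 0 < complex.Re (z 0 i)) ->
  \det (1%:M + diag_mx z *m map_mx (real_complex R) M) != 0.
Proof.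
move=> M_psd z_pos; apply/det0P => -[x x_neq0 x_ker].
set y := x *m diag_mx z; set N := map_mx (real_complex R) M.
have x_eq : x = - (y *m N).
  by apply/eqP; rewrite -addr_eq0 -x_ker mulmxDr mulmx1 mulmxA.
have := Re_dotc_mul_diag_gt0 x_neq0 z_pos.
rewrite -/y {1}x_eq dotcNl raddfN /= oppr_gt0 Re_dotc_real_mul.
by apply/negP; rewrite -leNgt addr_ge0.
Qed.

Lemma meval_principal_minor_poly (R : rcfType) n (M : 'M[R]_n) (z : 'I_n -> R[i]) :
  (principal_minor_poly M).@[z] =
  \sum_(I : {set 'I_n})
    \det (principal_submx (map_mx (real_complex R) M) I) * \prod_(i in I) z i.
Proof.
rewrite /principal_minor_poly rmorph_sum; apply: eq_bigr => I _.
rewrite rmorphM /= mevalC rmorph_prod /=; congr (_ * _).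
  by rewrite /principal_submx -map_mxsub det_map_mx.
by apply: eq_bigr => i _; rewrite mevalXU.
Qed.

Theorem lemma4p4 (R : rcfType) (n : nat) (A : 'M[R]_n) (v : 'cV[R]_n) :
  skew_symmetric A ->
  hurwitz_stable (principal_minor_poly (A + v *m v^T)).
Proof.
move=> skewA z z_pos; rewrite meval_principal_minor_poly.
have row_z i : z i = (\row_j z j) 0 i by rewrite mxE.
under eq_bigr => I _ do under eq_bigr => i _ do rewrite row_z.
rewrite -det_add1_diag_mul; apply: det_add1_diag_mul_real_neq0 => [a|i].
  by rewrite quad_formD quad_form_skew // quad_form_rank1 add0r sqr_ge0.
(* [hurwitz_stable] uses the [R[i]]-valued ['Re], not the projection [complex.Re]. *)
by move: (z_pos i); rewrite mxE -complexRe ltcR.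
Qed.
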